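(* In the setting below, let $y^*\in\mathbb{R}^m_+$ be a dual optimal solution, i.e. $(x^*,y^* )$ satisfies the KKT condition, and let $\hat x\in\mathcal{X}$ and $\beta>0$. 1. If $\|\hat x-x^*\|^2\le 2\beta$, then $\|y^*\|_1\ge h_1(\hat x,\beta):=r\big[\|\nabla G(\hat x)\|+L_X\sqrt{2\beta}\big]^{-1}$. 2. If $(y^* )^\top\mu\cdot\|\hat x-x^*\|^2\le 2\beta$, then $$\|y^*\|_1\ge h_2(\hat x,\beta):=\Big[\tfrac{L_X}{r}\sqrt{\tfrac{\beta}{2\underline{\mu}}}+\sqrt{\tfrac{L_X^2\beta}{2\underline{\mu}r^2}+\tfrac{\|\nabla G(\hat x)\|}{r}}\Big]^{-2}.$$
   Context: Problem: $\min_{x\in\mathbb{R}^n}f(x)$ s.t. $g_i(x)\le0$, $i=1,\dots,m$; $f$ convex, continuous, bounded below; each $g_i$ differentiable and $\mu_i$-strongly convex ($\mu_i>0$). $G(x)=(g_1(x),\dots,g_m(x))^\top$, $\nabla G(x)=[\nabla g_1(x),\dots,\nabla g_m(x)]\in\mathbb{R}^{n\times m}$, $\mu=(\mu_1,\dots,\mu_m)^\top$, $\underline{\mu}=\min_i\mu_i$; $\|\cdot\|$ is the Euclidean norm and the induced operator norm on matrices. KKT: $y^*\ge0$, $0\in\partial f(x^* )+\nabla G(x^* )y^*$, $\langle y^*,G(x^* )\rangle=0$. Standing assumptions: there is $\tilde x$ with $g_i(\tilde x)<0$ for all $i$; for every minimizer $x_0^*$ of $f$ some $g_i(x_0^* )>0$;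 $x^*$ is the (unique) optimal solution; $r$ is a known constant with $\min_{\xi\in\partial f(x^* )}\|\xi\|\ge r>0$. $\mathcal{X}=\mathcal{B}(\tilde x,\min_i 2\sqrt{-2g_i(x_i^* )/\mu_i})$ with $x_i^*=\arg\min g_i$. $L_X>0$ satisfies $\|\nabla G(x)-\nabla G(\bar x)\|\le L_X\|x-\bar x\|$ for all $x,\bar x\in\mathcal{X}$. *)

From HB Require Import structures.
From mathcomp Require Import all_boot all_order all_algebra.
From mathcomp Require Import classical_sets boolp reals.
Set Implicit Arguments. Unset Strict Implicit. Unset Printing Implicit Defensive.
Import Order.TTheory GRing.Theory Num.Theory.
Local Open Scope ring_scope.
Local Open Scope classical_set_scope.

Section Defs.
Variable R : realType.

Definition dotv (n : nat) (u v : 'cV[R]_n) : R := \sum_(k < n) u k 0 * v k 0.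
Definition enorm (n : nat) (u : 'cV[R]_n) : R := Num.sqrt (dotv u u).

Definition opnorm (n m : nat) (A : 'M[R]_(n, m)) : R :=
  sup [set enorm (A *m v) | v in [set v : 'cV[R]_m | enorm v <= 1]].

Definition l1norm (m : nat) (y : 'cV[R]_m) : R := \sum_(i < m) `|y i 0|.

Definition convex_fun (n : nat) (f : 'cV[R]_n -> R) : Prop :=
  forall (x y : 'cV[R]_n) (t : R), 0 <= t <= 1 ->
    f (t *: x + (1 - t) *: y) <= t * f x + (1 - t) * f y.

Definition strongly_convex (n : nat) (mu : R) (g : 'cV[R]_n -> R) : Prop :=
  forall (x y : 'cV[R]_n) (t : R), 0 <= t <= 1 ->
    g (t *: x + (1 - t) *: y) <=
      t * g x + (1 - t) * g y - mu / 2 * t * (1 - t) * enorm (x - y) ^+ 2.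

Definition econtinuous (n : nat) (f : 'cV[R]_n -> R) : Prop :=
  forall (x : 'cV[R]_n) (eps : R), 0 < eps -> exists2 delta : R, 0 < delta &
    forall y, enorm (y - x) < delta -> `|f y - f x| < eps.

Definition bounded_below (n : nat) (f : 'cV[R]_n -> R) : Prop :=
  exists c : R, forall x, c <= f x.

Definition is_gradient (n : nat) (g : 'cV[R]_n -> R) (x d : 'cV[R]_n) : Prop :=
  forall eps : R, 0 < eps -> exists2 delta : R, 0 < delta &
    forall y, enorm (y - x) < delta ->
      `|g y - g x - dotv d (y - x)| <= eps * enorm (y - x).

Definition subgrad (n : nat) (f : 'cV[R]_n -> R) (x xi : 'cV[R]_n) : Prop :=
  forall y, f x + dotv xi (y - x) <= f y.

(* nabla G(x) = [grad g_1(x), ..., grad g_m(x)] in R^{n x m} *)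
Definition jacG (n m : nat) (dg : 'I_m -> 'cV[R]_n -> 'cV[R]_n) (x : 'cV[R]_n)
  : 'M[R]_(n, m) := \matrix_(k < n, i < m) dg i x k 0.

Definition Gvec (n m : nat) (g : 'I_m -> 'cV[R]_n -> R) (x : 'cV[R]_n)
  : 'cV[R]_m := \col_(i < m) g i x.

Definition feasible (n m : nat) (g : 'I_m -> 'cV[R]_n -> R) (x : 'cV[R]_n) : Prop :=
  forall i, g i x <= 0.

(* the set X = closed ball B(xt, min_i 2 sqrt(-2 g_i(xs_i)/mu_i)) *)
Definition inX (n m : nat) (g : 'I_m -> 'cV[R]_n -> R) (mu : 'I_m -> R)
  (xs : 'I_m -> 'cV[R]_n) (xt x : 'cV[R]_n) : Prop :=
  forall i, enorm (x - xt) <= 2 * Num.sqrt (- 2 * g i (xs i) / mu i).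

End Defs.

From HB Require Import structures.
From mathcomp Require Import all_boot all_order all_algebra.
From mathcomp Require Import classical_sets boolp reals.
From mathcomp Require Import ring lra.
Import Order.TTheory GRing.Theory Num.Theory.
Local Open Scope ring_scope.

(* Stationarity gives [xi = - nabla G(xstar) ystar] with [r <= |xi|]; since
   [xstar] lies in X, the Lipschitz bound on [nabla G] yields
   [r <= (|nabla G(xhat)| + L_X |xhat - xstar|) |ystar|_1].  That [xstar]
   (like the Slater point) lies in X comes from the quadratic growth
   [g_i x - g_i (xs i) >= mu_i / 2 |x - xs i|^2] of a strongly convex function
   around its minimiser.  Part 1 then bounds [|xhat - xstar|] by [sqrt (2 beta)].
   For part 2, [mubar |ystar|_1 <= ystar^T mu] bounds
   [|xhat - xstar| sqrt |ystar|_1], which turns the inequality into a quadratic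
   one in [sqrt |ystar|_1]; the bracket of [h_2] is the reciprocal of its
   positive root. *)

Section Euclidean.
Context {R : realType}.

Lemma dotvC {n} (u v : 'cV[R]_n) : dotv u v = dotv v u.
Proof. by apply: eq_bigr => k _; rewrite mulrC. Qed.

Lemma dotvDl {n} (u v w : 'cV[R]_n) : dotv (u + v) w = dotv u w + dotv v w.
Proof. by rewrite /dotv -big_split; apply: eq_bigr => k _; rewrite !mxE mulrDl. Qed.

Lemma dotvZl {n} a (u w : 'cV[R]_n) : dotv (a *: u) w = a * dotv u w.
Proof. by rewrite /dotv mulr_sumr; apply: eq_bigr => k _; rewrite !mxE mulrA. Qed.

Lemma dotvNl {n} (u w : 'cV[R]_n) : dotv (- u) w = - dotv u w.
Proof. by rewrite -scaleN1r dotvZl mulN1r. Qed.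

Lemma dotvDr {n} (u v w : 'cV[R]_n) : dotv w (u + v) = dotv w u + dotv w v.
Proof. by rewrite dotvC dotvDl !(dotvC w). Qed.

Lemma dotvZr {n} a (u w : 'cV[R]_n) : dotv w (a *: u) = a * dotv w u.
Proof. by rewrite dotvC dotvZl dotvC. Qed.

Lemma dotvNr {n} (u w : 'cV[R]_n) : dotv w (- u) = - dotv w u.
Proof. by rewrite dotvC dotvNl dotvC. Qed.

Lemma dotv0l {n} (u : 'cV[R]_n) : dotv 0 u = 0.
Proof. by rewrite /dotv big1 // => k _; rewrite mxE mul0r. Qed.

Lemma dotvv_ge0 {n} (u : 'cV[R]_n) : 0 <= dotv u u.
Proof. by apply: sumr_ge0 => k _; rewrite -expr2 sqr_ge0. Qed.

Lemma dotvv_eq0 {n} (u : 'cV[R]_n) : dotv u u = 0 -> u = 0.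
Proof.
move=> u0; apply/matrixP => i j; rewrite ord1 mxE.
have /eqP : u i 0 * u i 0 = 0.
  apply: (psumr_eq0P (P := predT) (F := fun k => u k 0 * u k 0)) => // k _.
  by rewrite -expr2 sqr_ge0.
by rewrite mulf_eq0 orbb => /eqP.
Qed.

Lemma enorm_ge0 {n} (u : 'cV[R]_n) : 0 <= enorm u.
Proof. exact: sqrtr_ge0. Qed.

Lemma enorm_sqr {n} (u : 'cV[R]_n) : enorm u ^+ 2 = dotv u u.
Proof. by rewrite sqr_sqrtr // dotvv_ge0. Qed.

Lemma enorm_eq0 {n} (u : 'cV[R]_n) : enorm u = 0 -> u = 0.
Proof. by move=> u0; apply: dotvv_eq0; rewrite -enorm_sqr u0 expr0n. Qed.

Lemma enorm0 {n} : enorm (0 : 'cV[R]_n) = 0.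
Proof. by rewrite /enorm dotv0l sqrtr0. Qed.

Lemma enormZ {n} a (u : 'cV[R]_n) : enorm (a *: u) = `|a| * enorm u.
Proof. by rewrite /enorm dotvZl dotvZr mulrA -expr2 sqrtrM ?sqr_ge0 // sqrtr_sqr. Qed.

Lemma enormN {n} (u : 'cV[R]_n) : enorm (- u) = enorm u.
Proof. by rewrite -scaleN1r enormZ normrN1 mul1r. Qed.

Lemma enormB {n} (u v : 'cV[R]_n) : enorm (u - v) = enorm (v - u).
Proof. by rewrite -enormN opprB. Qed.

Lemma dotv_le_enorm {n} (u v : 'cV[R]_n) : dotv u v <= enorm u * enorm v.
Proof.
have [->|/eqP u_neq0] := eqVneq u 0; first by rewrite dotv0l enorm0 mul0r.
have [->|/eqP v_neq0] := eqVneq v 0; first by rewrite dotvC dotv0l enorm0 mulr0.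
set a := enorm u; set b := enorm v.
have a_gt0 : 0 < a by rewrite lt_neqAle eq_sym enorm_ge0 andbT; apply/eqP => /enorm_eq0.
have b_gt0 : 0 < b by rewrite lt_neqAle eq_sym enorm_ge0 andbT; apply/eqP => /enorm_eq0.
have := dotvv_ge0 (b *: u - a *: v).
rewrite !dotvDl !dotvDr !dotvNl !dotvNr !dotvZl !dotvZr (dotvC v u) -!enorm_sqr -/a -/b.
have := mulr_gt0 a_gt0 b_gt0; nra.
Qed.

Lemma enormD {n} (u v : 'cV[R]_n) : enorm (u + v) <= enorm u + enorm v.
Proof.
rewrite -(ler_pXn2r (n := 2)) ?nnegrE ?addr_ge0 ?enorm_ge0 //.
rewrite enorm_sqr dotvDl !dotvDr (dotvC v u) -!enorm_sqr.
have := dotv_le_enorm u v; lra.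
Qed.

Lemma l1norm_ge0 {n} (u : 'cV[R]_n) : 0 <= l1norm u.
Proof. exact: sumr_ge0. Qed.

Lemma enorm_le_l1norm {n} (u : 'cV[R]_n) : enorm u <= l1norm u.
Proof.
rewrite -(ler_pXn2r (n := 2)) ?nnegrE ?enorm_ge0 ?l1norm_ge0 //.
rewrite enorm_sqr expr2 {2}/l1norm mulr_sumr; apply: ler_sum => k _.
apply: le_trans (ler_norm _) _; rewrite normrM mulrC ler_wpM2r //.
by rewrite /l1norm (bigD1 k) //= lerDl sumr_ge0.
Qed.

Lemma coord_le_enorm {n} (v : 'cV[R]_n) j : `|v j 0| <= enorm v.
Proof.
rewrite -(ler_pXn2r (n := 2)) ?nnegrE ?enorm_ge0 //.
rewrite real_normK ?num_real // enorm_sqr /dotv (bigD1 j) //= expr2 lerDl.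
by apply: sumr_ge0 => k _; rewrite -expr2 sqr_ge0.
Qed.

Lemma opnorm_has_ubound {n m} (A : 'M[R]_(n, m)) :
  has_ubound [set enorm (A *m v) | v in [set v : 'cV[R]_m | enorm v <= 1]].
Proof.
exists (\sum_i \sum_j `|A i j|) => _ [v /= v_le1 <-].
apply: le_trans (enorm_le_l1norm _) _; apply: ler_sum => i _.
rewrite mxE; apply: le_trans (ler_norm_sum _ _ _) _; apply: ler_sum => j _.
rewrite normrM -[leRHS]mulr1 ler_wpM2l //.
exact: le_trans (coord_le_enorm v j) v_le1.
Qed.

Lemma opnorm_ge0 {n m} (A : 'M[R]_(n, m)) : 0 <= opnorm A.
Proof.
rewrite -(@enorm0 n) -(mulmx0 _ A); apply: ub_le_sup; first exact: opnorm_has_ubound.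
by exists 0; rewrite //= enorm0.
Qed.

Lemma enorm_mulmx_le {n m} (A : 'M[R]_(n, m)) v : enorm (A *m v) <= opnorm A * enorm v.
Proof.
have [/enorm_eq0 ->|v_neq0] := eqVneq (enorm v) 0.
  by rewrite mulmx0 !enorm0 mulr0.
have v_gt0 : 0 < enorm v by rewrite lt_neqAle eq_sym v_neq0 enorm_ge0.
have nv : enorm ((enorm v)^-1 *: v) = 1.
  by rewrite enormZ ger0_norm ?invr_ge0 ?enorm_ge0 // mulVf.
rewrite -ler_pdivrMr // mulrC -[(enorm v)^-1]ger0_norm ?invr_ge0 ?enorm_ge0 //.
rewrite -enormZ scalemxAr; apply: ub_le_sup; first exact: opnorm_has_ubound.
by exists ((enorm v)^-1 *: v); rewrite //= nv.
Qed.

Lemma enorm_mulmx_le_l1norm {n m} (A B : 'M[R]_(n, m)) y :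
  enorm (A *m y) <= (opnorm B + opnorm (A - B)) * l1norm y.
Proof.
have -> : A *m y = B *m y + (A - B) *m y by rewrite mulmxBl addrC subrK.
apply: le_trans (enormD _ _) _; rewrite mulrDl.
apply: lerD; apply: le_trans (enorm_mulmx_le _ _) _;
  by rewrite ler_wpM2l ?opnorm_ge0 ?enorm_le_l1norm.
Qed.

Lemma l1norm_le_dotv {m} (y w : 'cV[R]_m) c :
  (forall i, 0 <= y i 0) -> (forall i, c <= w i 0) -> c * l1norm y <= dotv y w.
Proof.
move=> y_ge0 c_le; rewrite mulr_sumr; apply: ler_sum => i _.
by rewrite ger0_norm // mulrC ler_wpM2l.
Qed.

End Euclidean.

Lemma ler_of_forall_1BtM {R : realType} (a b : R) :
  (forall t, 0 < t -> t <= 1 -> (1 - t) * a <= b) -> a <= b.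
Proof.
move=> le_ab; have b_ge0 : 0 <= b by have := le_ab 1 ltr01 (lexx 1); rewrite subrr mul0r.
rewrite leNgt; apply/negP => b_lt_a.
have a_gt0 : 0 < a by apply: le_lt_trans b_lt_a.
(* at [t = (a - b) / (2 a)] the left-hand side is the midpoint of [a] and [b] *)
have := le_ab ((a - b) / (2 * a)).
rewrite divr_gt0 ?mulr_gt0 ?subr_gt0 // ler_pdivrMr ?mulr_gt0 //.
have -> : (1 - (a - b) / (2 * a)) * a = (a + b) / 2 by field; rewrite gt_eqF.
lra.
Qed.

Section StrongConvexity.
Context {R : realType} {n : nat}.
Context {mu : R} {g : 'cV[R]_n -> R} {xs : 'cV[R]_n}.
Hypotheses (mu_gt0 : 0 < mu) (g_sconvex : strongly_convex mu g)
  (xs_min : forall y, g xs <= g y).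

Lemma sconvex_quadratic_growth x : mu / 2 * enorm (x - xs) ^+ 2 <= g x - g xs.
Proof.
apply: ler_of_forall_1BtM => t t_gt0 t_le1.
rewrite -(ler_pM2l t_gt0).
have := g_sconvex x xs t; rewrite (ltW t_gt0) t_le1 => /(_ isT).
have := xs_min (t *: x + (1 - t) *: xs); lra.
Qed.

Lemma sconvex_sublevel_ball x :
  g x <= 0 -> enorm (x - xs) <= Num.sqrt (- 2 * g xs / mu).
Proof.
move=> gx_le0; have := sconvex_quadratic_growth x; have := xs_min x => gxs_le growth.
rewrite -(ler_pXn2r (n := 2)) ?nnegrE ?enorm_ge0 ?sqrtr_ge0 // [leRHS]sqr_sqrtr.
  by rewrite ler_pdivlMr //; lra.
by rewrite divr_ge0 ?(ltW mu_gt0) //; lra.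
Qed.

End StrongConvexity.

Lemma feasible_inX {R : realType} n m (g : 'I_m -> 'cV[R]_n -> R) (mu : 'I_m -> R)
    (xs : 'I_m -> 'cV[R]_n) (xt x : 'cV[R]_n) :
  (forall i, 0 < mu i) -> (forall i, strongly_convex (mu i) (g i)) ->
  (forall i y, g i (xs i) <= g i y) ->
  feasible g xt -> feasible g x -> inX g mu xs xt x.
Proof.
move=> mu_gt0 g_sconvex xs_min xt_feas x_feas i.
have := sconvex_sublevel_ball (mu_gt0 i) (g_sconvex i) (xs_min i) _ (x_feas i).
have := sconvex_sublevel_ball (mu_gt0 i) (g_sconvex i) (xs_min i) _ (xt_feas i).
have -> : x - xt = (x - xs i) + (xs i - xt) by rewrite addrA subrK.
have := enormD (x - xs i) (xs i - xt); rewrite (enormB (xs i)); lra.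
Qed.

Lemma quadratic_root_bound {R : realType} (al c u : R) :
  0 <= al -> 0 <= c -> 0 <= u -> 1 <= al * u ^+ 2 + 2 * c * u ->
  ((c + Num.sqrt (c ^+ 2 + al)) ^+ 2)^-1 <= u ^+ 2.
Proof.
move=> al_ge0 c_ge0 u_ge0 le1; set S := Num.sqrt _.
have S2 : S ^+ 2 = c ^+ 2 + al by rewrite sqr_sqrtr // addr_ge0 ?sqr_ge0.
have S_ge0 : 0 <= S := sqrtr_ge0 _.
have le1_root : 1 <= u * (c + S).
  rewrite leNgt; apply/negP; rewrite mulrDr => lt1.
  have uS_ge0 : 0 <= u * S by rewrite mulr_ge0.
  have : (u * S) ^+ 2 < (1 - u * c) ^+ 2.
    by rewrite ltr_pXn2r // ?nnegrE; lra.
  rewrite !exprMn S2; nra.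
have cS_gt0 : 0 < c + S.
  rewrite lt_neqAle addr_ge0 // andbT; apply/eqP => cS0.
  by move: le1_root; rewrite -cS0 mulr0; lra.
rewrite -[leLHS]div1r ler_pdivrMr ?exprn_gt0 // -exprMn.
exact: exprn_ege1.
Qed.

Lemma multiplier_bound_dist {R : realType} {r a L s d b : R} :
  0 <= a -> 0 < L -> 0 <= s -> 0 < b -> d <= b ->
  r <= (a + L * d) * s -> r / (a + L * b) <= s.
Proof.
move=> a_ge0 L_gt0 s_ge0 b_gt0 d_le_b r_le.
rewrite ler_pdivrMr; last by rewrite ltr_wpDl // mulr_gt0.
by apply: le_trans r_le _; rewrite mulrC ler_wpM2l // lerD2l ler_wpM2l // ltW.
Qed.

Lemma multiplier_bound_weighted {R : realType} {r a L s d mb beta : R} :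
  0 < r -> 0 <= a -> 0 < L -> 0 <= s -> 0 <= d -> 0 < mb -> 0 < beta ->
  r <= (a + L * d) * s -> mb * s * d ^+ 2 <= 2 * beta ->
  ((L / r * Num.sqrt (beta / (2 * mb))
    + Num.sqrt (L ^+ 2 * beta / (2 * mb * r ^+ 2) + a / r)) ^+ 2)^-1 <= s.
Proof.
move=> r_gt0 a_ge0 L_gt0 s_ge0 d_ge0 mb_gt0 beta_gt0 r_le sd_le.
set k := Num.sqrt (beta / (2 * mb)); set c := L / r * k.
have k2 : k ^+ 2 = beta / (2 * mb) by rewrite sqr_sqrtr // ltW // divr_gt0 ?mulr_gt0.
have k_ge0 : 0 <= k := sqrtr_ge0 _.
have c_ge0 : 0 <= c by rewrite mulr_ge0 // divr_ge0 // ltW.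
have -> : L ^+ 2 * beta / (2 * mb * r ^+ 2) = c ^+ 2.
  by rewrite /c !exprMn k2; field; rewrite !gt_eqF.
set u := Num.sqrt s; have u2 : u ^+ 2 = s by rewrite sqr_sqrtr.
have u_ge0 : 0 <= u := sqrtr_ge0 _.
rewrite -[leRHS]u2; apply: quadratic_root_bound => //; first by rewrite divr_ge0 // ltW.
(* [d u <= 2 k] turns [r <= (a + L d) u^2] into a quadratic inequality in [u] *)
have du_le : d * u <= 2 * k.
  rewrite -(ler_pXn2r (n := 2)) ?nnegrE ?mulr_ge0 // !exprMn u2 k2 -(ler_pM2l mb_gt0).
  have -> : mb * (2 ^+ 2 * (beta / (2 * mb))) = 2 * beta by field; rewrite gt_eqF.
  by rewrite mulrA mulrAC.
rewrite -(ler_pM2l r_gt0) mulr1; apply: le_trans r_le _.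
have -> : r * (a / r * u ^+ 2 + 2 * c * u) = a * s + L * (2 * k) * u.
  by rewrite -u2 /c; field; rewrite gt_eqF.
have := ler_wpM2l (mulr_ge0 (ltW L_gt0) u_ge0) du_le.
rewrite -u2; lra.
Qed.

Theorem proposition4 (R : realType) (n m : nat)
  (f : 'cV[R]_n -> R) (g : 'I_m -> 'cV[R]_n -> R)
  (dg : 'I_m -> 'cV[R]_n -> 'cV[R]_n) (mu : 'I_m -> R) (mubar : R)
  (xt : 'cV[R]_n) (xs : 'I_m -> 'cV[R]_n) (xstar : 'cV[R]_n) (r LX : R)
  (ystar : 'cV[R]_m) (xhat : 'cV[R]_n) (beta : R) :
  (* f convex, continuous, bounded below *)
  convex_fun f -> econtinuous f -> bounded_below f ->
  (* each g_i differentiable with gradient dg i, and mu_i-strongly convex *)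
  (forall i x, is_gradient (g i) x (dg i x)) ->
  (forall i, 0 < mu i) -> (forall i, strongly_convex (mu i) (g i)) ->
  (* mubar = min_i mu_i *)
  (forall i, mubar <= mu i) -> (exists i, mubar = mu i) ->
  (* Slater point *)
  (forall i, g i xt < 0) ->
  (* every minimizer of f violates some constraint *)
  (forall x0, (forall x, f x0 <= f x) -> exists i, 0 < g i x0) ->
  (* xstar is the unique optimal solution *)
  feasible g xstar ->
  (forall x, feasible g x -> f xstar <= f x) ->
  (forall x, feasible g x -> (forall z, feasible g z -> f x <= f z) -> x = xstar) ->
  (* r *)
  0 < r -> (forall xi, subgrad f xstar xi -> r <= enorm xi) ->
  (* x_i^* = argmin g_i *)
  (forall i x, g i (xs i) <= g i x) ->
  (* L_X : Lipschitz constant of nabla G on X *)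
  0 < LX ->
  (forall x xb, inX g mu xs xt x -> inX g mu xs xt xb ->
     opnorm (jacG dg x - jacG dg xb) <= LX * enorm (x - xb)) ->
  (* (xstar, ystar) satisfies KKT *)
  (forall i, 0 <= ystar i 0) ->
  (exists2 xi, subgrad f xstar xi & xi + jacG dg xstar *m ystar = 0) ->
  dotv ystar (Gvec g xstar) = 0 ->
  (* xhat in X, beta > 0 *)
  inX g mu xs xt xhat -> 0 < beta ->
  (enorm (xhat - xstar) ^+ 2 <= 2 * beta ->
     r / (opnorm (jacG dg xhat) + LX * Num.sqrt (2 * beta)) <= l1norm ystar)
  /\
  (dotv ystar (\col_i mu i) * enorm (xhat - xstar) ^+ 2 <= 2 * beta ->
     ((LX / r * Num.sqrt (beta / (2 * mubar))
       + Num.sqrt (LX ^+ 2 * beta / (2 * mubar * r ^+ 2)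
                   + opnorm (jacG dg xhat) / r)) ^+ 2)^-1 <= l1norm ystar).
Proof.
move=> _ _ _ _ mu_gt0 g_sconvex mubar_le [i0 mubar_eq] slater _ xstar_feas _ _ r_gt0 r_le
  xs_min LX_gt0 jac_lip y_ge0 [xi xi_sub stationary] _ xhat_X beta_gt0.
have xstar_X : inX g mu xs xt xstar.
  by apply: feasible_inX => // i; apply: ltW.
have r_le_y : r <= (opnorm (jacG dg xhat) + LX * enorm (xhat - xstar)) * l1norm ystar.
  apply: le_trans (r_le _ xi_sub) _.
  rewrite (_ : xi = - (jacG dg xstar *m ystar)) ?enormN; last first.
    by apply/eqP; rewrite -addr_eq0 stationary.
  apply: le_trans (enorm_mulmx_le_l1norm _ (jacG dg xhat) _) _.
  by rewrite ler_wpM2r ?l1norm_ge0 // lerD2l enormB jac_lip.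
split=> [dist_le | weighted_le].
  apply: multiplier_bound_dist r_le_y; rewrite ?opnorm_ge0 ?l1norm_ge0 //.
    by rewrite sqrtr_gt0 mulr_gt0.
  rewrite -(ler_pXn2r (n := 2)) ?nnegrE ?enorm_ge0 ?sqrtr_ge0 //.
  by rewrite [leRHS]sqr_sqrtr //; lra.
apply: (multiplier_bound_weighted r_gt0 (opnorm_ge0 _) LX_gt0 (l1norm_ge0 _)
  (enorm_ge0 _) _ beta_gt0 r_le_y); first by rewrite mubar_eq.
apply: le_trans weighted_le; rewrite ler_wpM2r ?sqr_ge0 //.
by apply: l1norm_le_dotv y_ge0 _ => i; rewrite mxE mubar_le.
Qed.
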